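(* Let $g\in C(\mathbb{R},\mathbb{R})$. Then $\mathcal{K}_{(-\infty,g]}=\mathcal{K}_{[g,\infty)}=\{\mathrm{CL}(E):E\in\mathrm{CL}(\mathbb{R})\}$, where $(-\infty,g]=\{f\in C(\mathbb{R},\mathbb{R}):f\le g\}$ and $[g,\infty)=\{f\in C(\mathbb{R},\mathbb{R}):g\le f\}$.
   Context: $f\le g$ means $f(x)\le g(x)$ for all $x\in\mathbb{R}$. For a closed set $E\subseteq\mathbb{R}$, $\mathrm{CL}(E)$ denotes the family of all closed subsets of $E$. For $\mathcal{G}\subseteq C(\mathbb{R},\mathbb{R})$ let $R_\mathcal{G}=\{(f,E)\in C(\mathbb{R},\mathbb{R})\times\mathrm{CL}(\mathbb{R}):(\exists h\in\mathcal{G})\, f\restriction E=h\restriction E\}$; for $\mathcal{F}\subseteq C(\mathbb{R},\mathbb{R})$ put $E_\mathcal{G}(\mathcal{F})=\{E\in\mathrm{CL}(\mathbb{R}):(\forall f\in\mathcal{F})\,(f,E)\in R_\mathcal{G}\}$, and let $\mathcal{K}_\mathcal{G}=\{E_\mathcal{G}(\mathcal{F}):\mathcal{F}\subseteq C(\mathbb{R},\mathbb{R})\}$. *)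

From Stdlib Require Export Reals.
Open Scope R_scope.

Definition isC (f : R -> R) : Prop := continuity f.

Definition CL (E : R -> Prop) : (R -> Prop) -> Prop :=
  fun A => closed_set A /\ (forall x, A x -> E x).

Definition R_G (G : (R -> R) -> Prop) (f : R -> R) (E : R -> Prop) : Prop :=
  isC f /\ closed_set E /\ exists h, G h /\ (forall x, E x -> f x = h x).

Definition E_G (G F : (R -> R) -> Prop) : (R -> Prop) -> Prop :=
  fun E => closed_set E /\ (forall f, F f -> R_G G f E).

Definition fam_eq (X Y : (R -> Prop) -> Prop) : Prop := forall A, X A <-> Y A.

Definition in_K (G : (R -> R) -> Prop) (X : (R -> Prop) -> Prop) : Prop :=
  exists F, (forall f, F f -> isC f) /\ fam_eq X (E_G G F).

Definition is_CL_family (X : (R -> Prop) -> Prop) : Prop :=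
  exists E, closed_set E /\ fam_eq X (CL E).

Definition below (g : R -> R) : (R -> R) -> Prop :=
  fun f => isC f /\ (forall x, f x <= g x).
Definition above (g : R -> R) : (R -> R) -> Prop :=
  fun f => isC f /\ (forall x, g x <= f x).

(* A continuous f agrees on a closed set E with some member of (-oo, g] iff
   f <= g on E: take min(f, g).  So E_G(F) is CL of the closed set
   {x | f x <= g x for all f in F}.  Conversely CL(E) = E_G(F) for F the
   continuous functions below g on E, because g plus a tent supported off E
   violates the constraint at any given point outside E.  The case [g, +oo)
   is symmetric, with max(f, g) and g minus a tent. *)

From Stdlib Require Import Reals Lra Classical FunctionalExtensionality.
Open Scope R_scope.

Lemma Rmax_half_sum_abs a b : Rmax a b = / 2 * (a + b + Rabs (a - b)).
Proof. unfold Rmax, Rabs; destruct (Rle_dec a b), (Rcase_abs (a - b)); lra. Qed.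

Lemma continuity_Rmax f g :
  continuity f -> continuity g -> continuity (fun x => Rmax (f x) (g x)).
Proof.
  intros Hf Hg.
  replace (fun x => Rmax (f x) (g x))
    with (fun x => / 2 * (f x + g x + Rabs (f x - g x)))
    by (apply functional_extensionality; intro; now rewrite Rmax_half_sum_abs).
  apply continuity_scal, continuity_plus.
  - exact (continuity_plus _ _ Hf Hg).
  - exact (continuity_comp _ _ (continuity_minus _ _ Hf Hg) Rcontinuity_abs).
Qed.

Lemma continuity_Rmin f g :
  continuity f -> continuity g -> continuity (fun x => Rmin (f x) (g x)).
Proof.
  intros Hf Hg.
  replace (fun x => Rmin (f x) (g x)) with (fun x => - Rmax (- f x) (- g x))
    by (apply functional_extensionality; intro; now rewrite Ropp_Rmax, !Ropp_involutive).
  exact (continuity_opp _ (continuity_Rmax _ _ (continuity_opp _ Hf) (continuity_opp _ Hg))).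
Qed.

Lemma open_set_pos u : continuity u -> open_set (fun x => 0 < u x).
Proof.
  intros Hu x Hx.
  destruct (Hu x (u x) Hx) as [a [Ha Hnear]].
  exists (mkposreal a Ha); intros y Hy; unfold disc in Hy; simpl in Hy.
  destruct (Req_dec x y) as [<- | Hxy]; [exact Hx |].
  specialize (Hnear y (conj (conj I Hxy) Hy)); unfold R_dist in Hnear.
  apply Rabs_def2 in Hnear; lra.
Qed.

Lemma closed_set_Rle f g :
  continuity f -> continuity g -> closed_set (fun x => f x <= g x).
Proof.
  intros Hf Hg x Hx; apply Rnot_le_lt in Hx.
  destruct (open_set_pos _ (continuity_minus _ _ Hf Hg) x) as [d Hd];
    unfold minus_fct in *; [lra |].
  exists d; intros y Hy Hle; specialize (Hd y Hy); lra.
Qed.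

Lemma closed_set_Inter {I : Type} (S : I -> Prop) (A : I -> R -> Prop) :
  (forall i, S i -> closed_set (A i)) -> closed_set (fun x => forall i, S i -> A i x).
Proof.
  intros HA x Hx.
  apply not_all_ex_not in Hx as [i Hi]; apply imply_to_and in Hi as [Si Hx].
  destruct (HA i Si x Hx) as [d Hd].
  exists d; intros y Hy Hall; exact (Hd y Hy (Hall i Si)).
Qed.

Lemma tent_off_closed E x : closed_set E -> ~ E x ->
  exists phi, continuity phi /\ (forall y, E y -> phi y = 0) /\ 0 < phi x.
Proof.
  intros HE Hx; destruct (HE x Hx) as [d Hd].
  assert (Hconst : forall c, continuity (fun _ => c))
    by (intro c; apply continuity_const; intros ? ?; reflexivity).
  exists (fun y => Rmax 0 (d - Rabs (y - x))); repeat split.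
  - apply continuity_Rmax; [apply Hconst |].
    apply continuity_minus; [apply Hconst |].
    apply (continuity_comp (fun y => y - x) Rabs); [| exact Rcontinuity_abs].
    exact (continuity_minus _ _ (derivable_continuous _ derivable_id) (Hconst x)).
  - intros y Ey; apply Rmax_left.
    destruct (Rlt_or_le (Rabs (y - x)) d) as [Hy | Hy]; [now destruct (Hd y Hy Ey) | lra].
  - rewrite Rminus_diag, Rabs_R0, Rmax_right; destruct d; simpl; lra.
Qed.

Section PointwiseConstraint.

Variable G : (R -> R) -> Prop.
Variable P : (R -> R) -> R -> Prop.

Hypothesis R_G_iff : forall f E,
  R_G G f E <-> isC f /\ closed_set E /\ (forall x, E x -> P f x).
Hypothesis closed_P : forall f, isC f -> closed_set (P f).
Hypothesis P_separates : forall E x, closed_set E -> ~ E x ->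
  exists f, isC f /\ (forall y, E y -> P f y) /\ ~ P f x.

Lemma E_G_eq_CL F : (forall f, F f -> isC f) ->
  fam_eq (E_G G F) (CL (fun x => forall f, F f -> P f x)).
Proof.
  intros HF A; unfold E_G, CL; setoid_rewrite R_G_iff.
  split; intros [HA H]; split; auto.
  - intros x Ax f Ff; now apply H.
Qed.

Lemma CL_eq_E_G E : closed_set E ->
  fam_eq (CL E) (E_G G (fun f => isC f /\ forall y, E y -> P f y)).
Proof.
  intros HE A; unfold E_G, CL; setoid_rewrite R_G_iff.
  split; intros [HA H]; split; auto.
  - intros f [Hf HfE]; repeat split; auto.
  - intros x Ax; apply NNPP; intro Ex.
    destruct (P_separates E x HE Ex) as [f [Hf [HfE Hfx]]].
    now apply Hfx, (H f (conj Hf HfE)).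
Qed.

Lemma in_K_iff_is_CL_family X : in_K G X <-> is_CL_family X.
Proof.
  split.
  - intros [F [HF HX]].
    exists (fun x => forall f, F f -> P f x); split.
    + apply closed_set_Inter; auto.
    + intro A; rewrite (HX A); apply E_G_eq_CL, HF.
  - intros [E [HE HX]].
    exists (fun f => isC f /\ forall y, E y -> P f y); split.
    + now intros f [Hf _].
    + intro A; rewrite (HX A); apply CL_eq_E_G, HE.
Qed.

End PointwiseConstraint.

Section ContinuousBound.

Variable g : R -> R.
Hypothesis hg : continuity g.

Lemma R_G_below f E :
  R_G (below g) f E <-> isC f /\ closed_set E /\ (forall x, E x -> f x <= g x).
Proof.
  unfold R_G, below; split.
  - intros [Hf [HE [h [[_ Hh] Hfh]]]]; repeat split; auto.
    intros x Ex; rewrite (Hfh x Ex); apply Hh.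
  - intros [Hf [HE Hle]]; repeat split; auto.
    exists (fun x => Rmin (f x) (g x)); repeat split.
    + exact (continuity_Rmin _ _ Hf hg).
    + intro x; apply Rmin_r.
    + intros x Ex; symmetry; exact (Rmin_left _ _ (Hle x Ex)).
Qed.

Lemma R_G_above f E :
  R_G (above g) f E <-> isC f /\ closed_set E /\ (forall x, E x -> g x <= f x).
Proof.
  unfold R_G, above; split.
  - intros [Hf [HE [h [[_ Hh] Hfh]]]]; repeat split; auto.
    intros x Ex; rewrite (Hfh x Ex); apply Hh.
  - intros [Hf [HE Hge]]; repeat split; auto.
    exists (fun x => Rmax (f x) (g x)); repeat split.
    + exact (continuity_Rmax _ _ Hf hg).
    + intro x; apply Rmax_r.
    + intros x Ex; symmetry; exact (Rmax_left _ _ (Hge x Ex)).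
Qed.

Lemma below_separates E x : closed_set E -> ~ E x ->
  exists f, isC f /\ (forall y, E y -> f y <= g y) /\ ~ f x <= g x.
Proof.
  intros HE Ex; destruct (tent_off_closed E x HE Ex) as [phi [Hphi [Hphi0 Hphix]]].
  exists (fun y => g y + phi y); repeat split.
  - exact (continuity_plus _ _ hg Hphi).
  - intros y Ey; rewrite (Hphi0 y Ey); lra.
  - lra.
Qed.

Lemma above_separates E x : closed_set E -> ~ E x ->
  exists f, isC f /\ (forall y, E y -> g y <= f y) /\ ~ g x <= f x.
Proof.
  intros HE Ex; destruct (tent_off_closed E x HE Ex) as [phi [Hphi [Hphi0 Hphix]]].
  exists (fun y => g y - phi y); repeat split.
  - exact (continuity_minus _ _ hg Hphi).
  - intros y Ey; rewrite (Hphi0 y Ey); lra.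
  - lra.
Qed.

End ContinuousBound.

Theorem corollary3p5 (g : R -> R) (hg : continuity g) :
  (forall X : (R -> Prop) -> Prop, in_K (below g) X <-> is_CL_family X) /\
  (forall X : (R -> Prop) -> Prop, in_K (above g) X <-> is_CL_family X).
Proof.
  split; intro X.
  - apply (in_K_iff_is_CL_family _ (fun f x => f x <= g x)).
    + exact (R_G_below g hg).
    + intros f Hf; exact (closed_set_Rle _ _ Hf hg).
    + exact (below_separates g hg).
  - apply (in_K_iff_is_CL_family _ (fun f x => g x <= f x)).
    + exact (R_G_above g hg).
    + intros f Hf; exact (closed_set_Rle _ _ hg Hf).
    + exact (above_separates g hg).
Qed.
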